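(* Let $X$ be a non-empty set, $\alpha$ an equivalence relation on $X$, and $f,g\in\mathcal T_X(\alpha)$. Then in the semigroup $\mathcal T_X(\alpha)$: (i) $f\,\mathscr L\,g$ iff $\operatorname{im}(f)=\operatorname{im}(g)$; (ii) $f\,\mathscr R\,g$ iff $f=g$, or $\ker(f)=\ker(g)$ and $\alpha$ separates both $\operatorname{im}(f)$ and $\operatorname{im}(g)$; (iii) $f\,\mathscr H\,g$ iff $f=g$, or $\ker(f)=\ker(g)$ and $\alpha$ separates $\operatorname{im}(f)=\operatorname{im}(g)$; (iv) $f\,\mathscr D\,g$ iff $\operatorname{im}(f)=\operatorname{im}(g)$, or $\operatorname{rank}(f)=\operatorname{rank}(g)$ and $\alpha$ separates both $\operatorname{im}(f)$ and $\operatorname{im}(g)$; (v) $f\,\mathscr J\,g$ iff $\operatorname{im}(f)=\operatorname{im}(g)$ or $\|\alpha f^{-1}\|=\operatorname{rank}(f)=\operatorname{rank}(g)=\|\alpha g^{-1}\|$. Further, $\mathscr D=\mathscr J$ in $\mathcal T_X(\alpha)$ if and only if $\|\alpha\|$ is finite or $\alpha=\Delta$.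
   Context: $\mathcal T_X$ is the semigroup of all maps $X\to X$ (written on the right, composed left to right). $\mathcal T_X(\alpha)=\{f\in\mathcal T_X:\ker(f)\supseteq\alpha\}$, where $\ker(f)=\{(x,y):xf=yf\}$. $\operatorname{rank}(f)=|\operatorname{im}(f)|$. $\|\sigma\|$ denotes the number of classes of an equivalence $\sigma$; $\alpha f^{-1}=\{(x,y):(xf,yf)\in\alpha\}$; $\Delta=\{(x,x):x\in X\}$. An equivalence $\sigma$ separates a set $B$ if each $\sigma$-class contains at most one element of $B$. Green's relations are computed within $\mathcal T_X(\alpha)$. *)

From Stdlib Require Import List RelationClasses.

Set Implicit Arguments.

Section Defs.
Variable X : Type.

(* Maps are written on the right: x (f * g) = (x f) g. *)
Definition tmul (f g : X -> X) : X -> X := fun x => g (f x).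

Definition TXa (alpha : X -> X -> Prop) (f : X -> X) : Prop :=
  forall x y, alpha x y -> f x = f y.

(* Principal ideal preorders in S = T_X(alpha), using S^1. *)
Definition leqL alpha (f g : X -> X) : Prop :=
  f = g \/ exists u, TXa alpha u /\ f = tmul u g.
Definition leqR alpha (f g : X -> X) : Prop :=
  f = g \/ exists v, TXa alpha v /\ f = tmul g v.
Definition leqJ alpha (f g : X -> X) : Prop :=
  f = g
  \/ (exists u, TXa alpha u /\ f = tmul u g)
  \/ (exists v, TXa alpha v /\ f = tmul g v)
  \/ (exists u v, TXa alpha u /\ TXa alpha v /\ f = tmul (tmul u g) v).

Definition GreenL alpha f g := leqL alpha f g /\ leqL alpha g f.
Definition GreenR alpha f g := leqR alpha f g /\ leqR alpha g f.
Definition GreenH alpha f g := GreenL alpha f g /\ GreenR alpha f g.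
Definition GreenD alpha f g :=
  exists h, TXa alpha h /\ GreenL alpha f h /\ GreenR alpha h g.
Definition GreenJ alpha f g := leqJ alpha f g /\ leqJ alpha g f.

Definition im (f : X -> X) : X -> Prop := fun y => exists x, f x = y.
Definition same_im (f g : X -> X) : Prop := forall y, im f y <-> im g y.
Definition same_ker (f g : X -> X) : Prop :=
  forall x y, f x = f y <-> g x = g y.

Definition separates (sigma : X -> X -> Prop) (B : X -> Prop) : Prop :=
  forall a b, B a -> B b -> sigma a b -> a = b.

Definition preimrel (alpha : X -> X -> Prop) (f : X -> X) : X -> X -> Prop :=
  fun x y => alpha (f x) (f y).

Definition classes (sigma : X -> X -> Prop) : Type :=
  { C : X -> Prop | exists x, forall y, C y <-> sigma x y }.

(* the subtype of image elements; rank f = cardinality of imset f *)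
Definition imset (f : X -> X) : Type := { y : X | im f y }.

End Defs.

Definition bijective_map (A B : Type) (h : A -> B) : Prop :=
  (forall a1 a2, h a1 = h a2 -> a1 = a2) /\ (forall b, exists a, h a = b).
Definition equipotent (A B : Type) : Prop := exists h : A -> B, bijective_map h.

Definition finite_type (T : Type) : Prop := exists l : list T, forall t, In t l.

From Stdlib Require Import List RelationClasses Lia.
From Stdlib Require Import Classical ClassicalEpsilon FunctionalExtensionality
  PropExtensionality ProofIrrelevance FinFun.

(* Left multiplication in T_X(alpha) can only shrink an image, so L is equality
   of images. Right multiplication by v in T_X(alpha) identifies
   alpha-equivalent image points, so it can be undone exactly when alpha
   separates the image: R is equality of kernels between maps with separated
   images, and D = L o R compares ranks. A two-sided factorisation f = u g v
   amounts to an injection of im f into the classes of alpha g^-1 (v must be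
   constant on each class), and ||alpha f^-1|| <= rank f always holds, so
   Schroeder-Bernstein gives J. When ||alpha|| is finite, ||alpha f^-1|| =
   rank f forces alpha to separate im f (a surjection between finite sets of
   equal size is injective), so D = J; when ||alpha|| is infinite and
   alpha <> Delta, a sequence of pairwise inequivalent points yields two maps of
   countable rank and ||.||, one of which has a non-separated image, that are
   J- but not D-related. *)

Lemma sig_ext {A : Type} {P : A -> Prop} (u v : sig P) :
  proj1_sig u = proj1_sig v -> u = v.
Proof.
  destruct u as [u pu], v as [v pv]; simpl; intros ->.
  f_equal; apply proof_irrelevance.
Qed.

Definition injects (A B : Type) : Prop := exists h : A -> B, Injective h.

Lemma injects_trans A B C : injects A B -> injects B C -> injects A C.
Proof. intros [h Hh] [k Hk]. exists (fun a => k (h a)). intros a1 a2 E; auto. Qed.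

Lemma equipotent_injects A B : equipotent A B -> injects A B.
Proof. intros [h [Hinj _]]. exists h; exact Hinj. Qed.

Lemma equipotent_sym A B : equipotent A B -> equipotent B A.
Proof.
  intros [h [Hinj Hsurj]].
  exists (fun b => proj1_sig (constructive_indefinite_description _ (Hsurj b))).
  split.
  - intros b1 b2 E.
    destruct (constructive_indefinite_description _ (Hsurj b1)) as [a1 <-].
    destruct (constructive_indefinite_description _ (Hsurj b2)) as [a2 <-].
    simpl in E; subst; reflexivity.
  - intros a. exists (h a).
    destruct (constructive_indefinite_description _ (Hsurj (h a))) as [a' E].
    simpl; auto.
Qed.

Lemma equipotent_trans A B C : equipotent A B -> equipotent B C -> equipotent A C.
Proof.
  intros [h [Hinj Hsurj]] [k [Kinj Ksurj]]. exists (fun a => k (h a)). split.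
  - intros a1 a2 E; auto.
  - intros c. destruct (Ksurj c) as [b <-]. destruct (Hsurj b) as [a <-]. eauto.
Qed.

(* [C] is the set of points whose backward [g o f]-chain starts outside the
   range of [g]: the bijection is [f] on [C] and [g^-1] off [C]. *)
Theorem Schroeder_Bernstein A B : injects A B -> injects B A -> equipotent A B.
Proof.
  intros [f Hf] [g Hg].
  set (s := fun a => g (f a)).
  set (C := fun a => exists n a0, (~ exists b, g b = a0) /\ a = Nat.iter n s a0).
  set (ginv := fun a => epsilon (inhabits (f a)) (fun b => g b = a)).
  assert (ginvK : forall a, ~ C a -> g (ginv a) = a).
  { intros a Hn. apply (epsilon_spec _ (fun b => g b = a)).
    apply NNPP; intro Hr. apply Hn. exists 0, a. auto. }
  assert (C_step : forall a, C a -> C (s a)).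
  { intros a [n [a0 [H0 ->]]]. exists (S n), a0. auto. }
  exists (fun a => match excluded_middle_informative (C a) with
                   | left _ => f a | right _ => ginv a end).
  split.
  - intros a1 a2.
    destruct (excluded_middle_informative (C a1)) as [c1|c1];
    destruct (excluded_middle_informative (C a2)) as [c2|c2]; intro E.
    + auto.
    + exfalso. apply c2. rewrite <- (ginvK a2 c2), <- E. exact (C_step a1 c1).
    + exfalso. apply c1. rewrite <- (ginvK a1 c1), E. exact (C_step a2 c2).
    + rewrite <- (ginvK a1 c1), <- (ginvK a2 c2), E. reflexivity.
  - intros b.
    destruct (excluded_middle_informative (C (g b))) as [[[|m] [a0 [H0 H1]]]|c].
    + exfalso. apply H0. exists b. auto.
    + exists (Nat.iter m s a0).
      destruct (excluded_middle_informative (C (Nat.iter m s a0))) as [_|c'].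
      * apply Hg. symmetry. exact H1.
      * exfalso. apply c'. exists m, a0. auto.
    + exists (g b).
      destruct (excluded_middle_informative (C (g b))) as [|_]; [contradiction|].
      apply Hg, ginvK, c.
Qed.

Lemma injects_finite A B : A -> injects A B -> finite_type B -> finite_type A.
Proof.
  intros a0 [h Hh] [l Hl].
  set (hinv := fun b => epsilon (inhabits a0) (fun a => h a = b)).
  exists (map hinv l). intro a.
  replace a with (hinv (h a)).
  - apply in_map, Hl.
  - apply Hh. apply (epsilon_spec _ (fun a' => h a' = h a)). eauto.
Qed.

Lemma injective_of_surjective_finite_equipotent A B (s : A -> B) :
  finite_type B -> equipotent B A -> Surjective s -> Injective s.
Proof.
  intros Fin [e [Einj Esurj]] Ssurj.
  assert (SEinj : Injective (fun b => s (e b))).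
  { apply (Endo_Injective_Surjective Fin); [intros x y; apply classic|].
    intro b. destruct (Ssurj b) as [a <-]. destruct (Esurj a) as [b' <-]. eauto. }
  intros a1 a2 E.
  destruct (Esurj a1) as [b1 <-]. destruct (Esurj a2) as [b2 <-].
  f_equal. apply SEinj. exact E.
Qed.

Section Classes.
Context {X : Type} (R : X -> X -> Prop) {HR : Equivalence R}.

Definition class_of (x : X) : classes R :=
  exist _ (R x) (ex_intro _ x (fun y => iff_refl (R x y))).

Lemma class_pred_eq x y : R x y -> R x = R y.
Proof.
  intro Hxy. apply functional_extensionality; intro z.
  apply propositional_extensionality. split; intro H.
  - transitivity x; [symmetry|]; assumption.
  - transitivity y; assumption.
Qed.

Lemma class_of_eq_iff x y : class_of x = class_of y <-> R x y.
Proof.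
  split; intro H.
  - apply (f_equal (fun C => proj1_sig C y)) in H. simpl in H.
    rewrite H. reflexivity.
  - apply sig_ext. exact (class_pred_eq x y H).
Qed.

Definition rep (C : classes R) : X :=
  proj1_sig (constructive_indefinite_description _ (proj2_sig C)).

Lemma class_of_rep C : class_of (rep C) = C.
Proof.
  unfold rep. destruct C as [P HP]; simpl.
  destruct (constructive_indefinite_description _ HP) as [x Hx]; simpl.
  apply sig_ext; simpl. apply functional_extensionality; intro y.
  apply propositional_extensionality. symmetry. apply Hx.
Qed.

Lemma rep_inj C1 C2 : R (rep C1) (rep C2) -> C1 = C2.
Proof.
  intro H. rewrite <- (class_of_rep C1), <- (class_of_rep C2).
  apply class_of_eq_iff, H.
Qed.

End Classes.

Arguments rep {X R} C.

#[local] Instance preimrel_Equivalence {X : Type} (alpha : X -> X -> Prop)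
  {Ha : Equivalence alpha} (f : X -> X) : Equivalence (preimrel alpha f).
Proof.
  unfold preimrel. split.
  - intro x. reflexivity.
  - intros x y H. symmetry. exact H.
  - intros x y z H1 H2. transitivity (f y); assumption.
Qed.

Section Images.
Context {X : Type}.

Definition im_incl (f g : X -> X) : Prop := forall y, im f y -> im g y.

Definition image_pt (f : X -> X) (x : X) : imset f :=
  exist _ (f x) (ex_intro _ x eq_refl).

Definition preimage_pt (f : X -> X) (y : X) : X :=
  epsilon (inhabits y) (fun x => f x = y).

Lemma preimage_ptK (f : X -> X) (y : X) : im f y -> f (preimage_pt f y) = y.
Proof. apply (epsilon_spec _ (fun x => f x = y)). Qed.

Lemma same_im_incl (f g : X -> X) : same_im f g <-> im_incl f g /\ im_incl g f.
Proof. unfold same_im, im_incl. firstorder. Qed.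

Lemma separates_same_im (sigma : X -> X -> Prop) (f g : X -> X) :
  same_im f g -> separates sigma (im f) -> separates sigma (im g).
Proof. intros S H a b Hfa Hfb. apply H; apply S; assumption. Qed.

Lemma injects_imset_comp {K : Type} (k : X -> K) (F : K -> X) :
  injects (imset (fun x => F (k x))) K.
Proof.
  exists (fun s => k (preimage_pt (fun x => F (k x)) (proj1_sig s))).
  intros s1 s2 E.
  apply sig_ext. rewrite <- (preimage_ptK _ _ (proj2_sig s1)),
    <- (preimage_ptK _ _ (proj2_sig s2)), E. reflexivity.
Qed.

Lemma injects_imset_of_im_incl (f g : X -> X) :
  im_incl f g -> injects (imset f) (imset g).
Proof.
  intro H. exists (fun s => exist _ (proj1_sig s) (H _ (proj2_sig s))).
  intros s1 s2 E. apply sig_ext. exact (f_equal (@proj1_sig _ _) E).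
Qed.

Lemma equipotent_imset_of_same_im (f g : X -> X) :
  same_im f g -> equipotent (imset f) (imset g).
Proof.
  rewrite same_im_incl. intros [H1 H2].
  apply Schroeder_Bernstein; apply injects_imset_of_im_incl; assumption.
Qed.

Lemma equipotent_imset_of_same_ker (f g : X -> X) :
  same_ker f g -> equipotent (imset f) (imset g).
Proof.
  intro K. exists (fun s => image_pt g (preimage_pt f (proj1_sig s))). split.
  - intros s1 s2 E. apply (f_equal (@proj1_sig _ _)) in E. simpl in E.
    apply K in E. apply sig_ext.
    rewrite <- (preimage_ptK _ _ (proj2_sig s1)), <- (preimage_ptK _ _ (proj2_sig s2)).
    exact E.
  - intros [y [x <-]]. exists (image_pt f x). apply sig_ext; simpl.
    apply K, preimage_ptK. exists x. reflexivity.
Qed.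

Lemma same_im_sym (f g : X -> X) : same_im f g -> same_im g f.
Proof. intros S y. symmetry. apply S. Qed.

Lemma same_ker_sym (f g : X -> X) : same_ker f g -> same_ker g f.
Proof. intros K x y. symmetry. apply K. Qed.

Lemma TXa_same_ker (alpha : X -> X -> Prop) (f g : X -> X) :
  same_ker f g -> TXa alpha g -> TXa alpha f.
Proof. intros K Tg x y H. apply K, Tg, H. Qed.

End Images.

Section ImageClasses.
Context {X : Type} (alpha : X -> X -> Prop) {Ha : Equivalence alpha}.

Lemma injects_classes_imset (f : X -> X) : injects (classes (preimrel alpha f)) (imset f).
Proof.
  exists (fun C => image_pt f (rep C)). intros C1 C2 E.
  apply (f_equal (@proj1_sig _ _)) in E. simpl in E.
  apply (rep_inj (preimrel alpha f)). red. rewrite E. reflexivity.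
Qed.

Definition image_class (f : X -> X) (s : imset f) : classes (preimrel alpha f) :=
  class_of _ (preimage_pt f (proj1_sig s)).

Lemma image_class_eq_iff (f : X -> X) (s1 s2 : imset f) :
  image_class f s1 = image_class f s2 <-> alpha (proj1_sig s1) (proj1_sig s2).
Proof.
  unfold image_class. rewrite (class_of_eq_iff _). unfold preimrel.
  rewrite (preimage_ptK _ _ (proj2_sig s1)), (preimage_ptK _ _ (proj2_sig s2)).
  reflexivity.
Qed.

Lemma image_class_surj (f : X -> X) : Surjective (image_class f).
Proof.
  intro C. exists (image_pt f (rep C)). rewrite <- (class_of_rep _ C) at 2.
  unfold image_class. apply (class_of_eq_iff _). red; simpl.
  rewrite preimage_ptK by (exists (rep C); reflexivity). reflexivity.
Qed.

Lemma equipotent_imset_classes (f : X -> X) :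
  separates alpha (im f) -> equipotent (imset f) (classes (preimrel alpha f)).
Proof.
  intro S. exists (image_class f). split; [|apply image_class_surj].
  intros s1 s2 E. apply image_class_eq_iff in E. apply sig_ext.
  apply S; [exact (proj2_sig s1)|exact (proj2_sig s2)|exact E].
Qed.

Lemma injects_classes_of_im_incl (f g : X -> X) :
  im_incl f g -> injects (classes (preimrel alpha f)) (classes (preimrel alpha g)).
Proof.
  intro H. exists (fun C => class_of _ (preimage_pt g (f (rep C)))). intros C1 C2 E.
  apply (class_of_eq_iff (preimrel alpha g)) in E. red in E.
  rewrite !preimage_ptK in E by (apply H; eexists; reflexivity).
  apply (rep_inj _). exact E.
Qed.

Lemma injects_classes_preimrel_classes (f : X -> X) :
  injects (classes (preimrel alpha f)) (classes alpha).
Proof.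
  exists (fun C => class_of alpha (f (rep C))). intros C1 C2 E.
  apply (rep_inj _). apply (class_of_eq_iff alpha) in E. exact E.
Qed.

End ImageClasses.

Section Green.
Context {X : Type} (alpha : X -> X -> Prop) {Ha : Equivalence alpha} (x0 : X).

Lemma left_factor (f g : X -> X) :
  TXa alpha f -> im_incl f g -> exists u, TXa alpha u /\ f = tmul u g.
Proof.
  intros Tf H. exists (fun x => preimage_pt g (f x)). split.
  - intros x y Hxy. rewrite (Tf x y Hxy). reflexivity.
  - apply functional_extensionality; intro x. unfold tmul.
    symmetry. apply preimage_ptK, H. exists x. reflexivity.
Qed.

Lemma leqL_iff (f g : X -> X) : TXa alpha f -> (leqL alpha f g <-> im_incl f g).
Proof.
  intro Tf. split.
  - intros [-> | [u [_ ->]]] y [x <-]; [exists x | exists (u x)]; reflexivity.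
  - intro H. right. apply left_factor; assumption.
Qed.

Lemma GreenL_iff (f g : X -> X) :
  TXa alpha f -> TXa alpha g -> (GreenL alpha f g <-> same_im f g).
Proof.
  intros Tf Tg. unfold GreenL.
  rewrite (leqL_iff f g Tf), (leqL_iff g f Tg), same_im_incl. reflexivity.
Qed.

Lemma right_factor (f g : X -> X) :
  same_ker f g -> separates alpha (im g) -> exists v, TXa alpha v /\ f = tmul g v.
Proof.
  intros K S. exists (fun y => f (epsilon (inhabits x0) (fun x => alpha y (g x)))). split.
  - (* [v y] depends on [y] only through the predicate [alpha y]. *)
    intros y y' Hy. rewrite (class_pred_eq alpha y y' Hy). reflexivity.
  - apply functional_extensionality; intro x. unfold tmul.
    apply K, S; [eexists; reflexivity | eexists; reflexivity |].
    apply (epsilon_spec _ (fun x' => alpha (g x) (g x'))). exists x. reflexivity.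
Qed.

Lemma same_ker_separates_of_right_factors (f g v w : X -> X) :
  TXa alpha v -> f = tmul g v -> g = tmul f w -> same_ker f g /\ separates alpha (im g).
Proof.
  intros Tv Ef Eg. split.
  - intros x y. split; intro H.
    + rewrite Eg. unfold tmul. rewrite H. reflexivity.
    + rewrite Ef. unfold tmul. rewrite H. reflexivity.
  - intros c d [x <-] [y <-] Hcd. rewrite Eg. unfold tmul. f_equal.
    rewrite Ef. unfold tmul. apply Tv, Hcd.
Qed.

Lemma GreenR_iff (f g : X -> X) : TXa alpha f -> TXa alpha g ->
  (GreenR alpha f g <->
     f = g \/ (same_ker f g /\ separates alpha (im f) /\ separates alpha (im g))).
Proof.
  intros Tf Tg. split.
  - intros [[-> | [v [Tv Ev]]] [E | [w [Tw Ew]]]].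
    + left. reflexivity.
    + left. reflexivity.
    + left. symmetry. exact E.
    + right.
      destruct (same_ker_separates_of_right_factors f g v w Tv Ev Ew) as [K Sg].
      destruct (same_ker_separates_of_right_factors g f w v Tw Ew Ev) as [_ Sf].
      auto.
  - intros [-> | [K [Sf Sg]]]; [split; left; reflexivity|].
    split; right; apply right_factor; auto using same_ker_sym.
Qed.

Lemma GreenH_iff (f g : X -> X) : TXa alpha f -> TXa alpha g ->
  (GreenH alpha f g <-> f = g \/ (same_ker f g /\ same_im f g /\ separates alpha (im f))).
Proof.
  intros Tf Tg. unfold GreenH. rewrite (GreenL_iff f g Tf Tg), (GreenR_iff f g Tf Tg).
  split.
  - intros [S [-> | [K [Sf _]]]]; [left; reflexivity | right; auto].
  - intros [-> | [K [S Sf]]].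
    + split; [intro; reflexivity | left; reflexivity].
    + split; [exact S|]. right. split; [exact K|].
      split; [exact Sf | exact (separates_same_im alpha f g S Sf)].
Qed.

Lemma exists_same_im_same_ker (f g : X -> X) :
  equipotent (imset g) (imset f) -> exists h, same_im f h /\ same_ker h g.
Proof.
  intros [phi [Pinj Psurj]]. exists (fun x => proj1_sig (phi (image_pt g x))). split.
  - intro y. split.
    + intro Hy. destruct (Psurj (exist _ y Hy)) as [[z [x <-]] Hx].
      exists x. exact (f_equal (@proj1_sig _ _) Hx).
    + intros [x <-]. exact (proj2_sig (phi (image_pt g x))).
  - intros x y. split; intro E.
    + apply sig_ext, Pinj in E. exact (f_equal (@proj1_sig _ _) E).
    + do 2 f_equal. apply sig_ext. exact E.
Qed.

Lemma GreenD_iff (f g : X -> X) : TXa alpha f -> TXa alpha g ->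
  (GreenD alpha f g <->
     same_im f g \/
     (equipotent (imset f) (imset g)
      /\ separates alpha (im f) /\ separates alpha (im g))).
Proof.
  intros Tf Tg. split.
  - intros [h [Th [HL HR]]].
    apply (GreenL_iff f h Tf Th) in HL. apply (GreenR_iff h g Th Tg) in HR.
    destruct HR as [<- | [K [Sh Sg]]]; [left; exact HL | right].
    split; [|split; [|exact Sg]].
    + eapply equipotent_trans;
        [apply equipotent_imset_of_same_im, HL | apply equipotent_imset_of_same_ker, K].
    + exact (separates_same_im alpha h f (same_im_sym f h HL) Sh).
  - intros [S | [E [Sf Sg]]].
    + exists g. split; [exact Tg|]. split.
      * apply GreenL_iff; assumption.
      * apply GreenR_iff; [assumption | assumption | left; reflexivity].
    + destruct (exists_same_im_same_ker f g (equipotent_sym _ _ E)) as [h [S K]].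
      assert (Th : TXa alpha h) by exact (TXa_same_ker alpha h g K Tg).
      exists h. split; [exact Th|]. split.
      * apply GreenL_iff; assumption.
      * apply GreenR_iff; [assumption | assumption |]. right.
        split; [exact K|]. split; [exact (separates_same_im alpha f h S Sf) | exact Sg].
Qed.

Lemma injects_imset_classes_of_factor (f g v w : X -> X) :
  TXa alpha v -> (forall x, f x = v (g (w x))) ->
  injects (imset f) (classes (preimrel alpha g)).
Proof.
  intros Tv E. exists (fun s => class_of _ (w (preimage_pt f (proj1_sig s)))).
  intros s1 s2 C. apply (class_of_eq_iff (preimrel alpha g)) in C. red in C.
  apply sig_ext.
  rewrite <- (preimage_ptK _ _ (proj2_sig s1)), <- (preimage_ptK _ _ (proj2_sig s2)), !E.
  apply Tv, C.
Qed.

(* [u] sends [x] to a point of the class [h (f x)]; since [h] is injective, [v]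
   can recover [f x] from the class of [g (u x)]. *)
Lemma two_sided_factor (f g : X -> X) :
  TXa alpha f -> injects (imset f) (classes (preimrel alpha g)) ->
  exists u v, TXa alpha u /\ TXa alpha v /\ f = tmul (tmul u g) v.
Proof.
  intros Tf [h Hh].
  exists (fun x => rep (h (image_pt f x))),
    (fun y => proj1_sig (epsilon (inhabits (image_pt f x0))
                           (fun t => alpha y (g (rep (h t)))))).
  split; [|split].
  - intros x y Hxy. do 2 f_equal. apply sig_ext. exact (Tf x y Hxy).
  - intros y y' Hy. rewrite (class_pred_eq alpha y y' Hy). reflexivity.
  - apply functional_extensionality; intro x. unfold tmul.
    assert (HP : exists t, alpha (g (rep (h (image_pt f x)))) (g (rep (h t))))
      by (exists (image_pt f x); reflexivity).
    apply epsilon_spec with (i := inhabits (image_pt f x0)) in HP.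
    apply (rep_inj (preimrel alpha g)), Hh in HP.
    rewrite <- HP. reflexivity.
Qed.

Lemma leqJ_iff (f g : X -> X) : TXa alpha f ->
  (leqJ alpha f g <-> im_incl f g \/ injects (imset f) (classes (preimrel alpha g))).
Proof.
  intro Tf. split.
  - intros [-> | [[u [_ ->]] | [[v [Tv ->]] | [u [v [_ [Tv ->]]]]]]].
    + left. intros y Hy. exact Hy.
    + left. intros y [x <-]. exists (u x). reflexivity.
    + right. apply (injects_imset_classes_of_factor _ g v (fun x => x) Tv).
      intro. reflexivity.
    + right. apply (injects_imset_classes_of_factor _ g v u Tv). intro. reflexivity.
  - intros [H | H].
    + right; left. apply left_factor; assumption.
    + right; right; right. apply two_sided_factor; assumption.
Qed.

Lemma GreenJ_iff (f g : X -> X) : TXa alpha f -> TXa alpha g ->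
  (GreenJ alpha f g <->
     same_im f g \/
     (equipotent (classes (preimrel alpha f)) (imset f)
      /\ equipotent (imset f) (imset g)
      /\ equipotent (imset g) (classes (preimrel alpha g)))).
Proof.
  intros Tf Tg. unfold GreenJ. rewrite (leqJ_iff f g Tf), (leqJ_iff g f Tg), same_im_incl.
  pose proof (injects_classes_imset alpha f).
  pose proof (injects_classes_imset alpha g).
  split.
  - (* In each mixed case the four sets lie on cycles of injections. *)
    intros [[I1 | J1] [I2 | J2]]; [left; split; assumption | ..];
      right; repeat split; apply Schroeder_Bernstein;
      eauto 7 using injects_trans, injects_imset_of_im_incl, injects_classes_of_im_incl.
  - intros [[I1 I2] | [E1 [E2 E3]]]; [split; left; assumption|].
    split; right; eapply injects_trans; apply equipotent_injects;
      [exact E2 | exact E3 | apply equipotent_sym, E2 | apply equipotent_sym, E1].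
Qed.

Lemma separates_of_equipotent_classes_imset (f : X -> X) :
  finite_type (classes alpha) \/ (forall x y, alpha x y <-> x = y) ->
  equipotent (classes (preimrel alpha f)) (imset f) -> separates alpha (im f).
Proof.
  intros [Fin | Triv] E; [|intros c d _ _ H; apply Triv, H].
  assert (Finf : finite_type (classes (preimrel alpha f)))
    by exact (injects_finite _ _ (class_of _ x0)
                (injects_classes_preimrel_classes alpha f) Fin).
  pose proof (injective_of_surjective_finite_equipotent _ _ _ Finf E
                (image_class_surj alpha f)) as Inj.
  intros c d Hc Hd Hcd.
  assert (E' : exist _ c Hc = exist _ d Hd)
    by (apply Inj, (image_class_eq_iff alpha f), Hcd).
  exact (f_equal (@proj1_sig _ _) E').
Qed.

Lemma GreenD_GreenJ (f g : X -> X) :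
  TXa alpha f -> TXa alpha g -> GreenD alpha f g -> GreenJ alpha f g.
Proof.
  intros Tf Tg. rewrite (GreenD_iff f g Tf Tg), (GreenJ_iff f g Tf Tg).
  intros [S | [E [Sf Sg]]]; [left; exact S | right].
  split; [|split; [exact E|]].
  - apply equipotent_sym, (equipotent_imset_classes alpha), Sf.
  - apply (equipotent_imset_classes alpha), Sg.
Qed.

Lemma GreenJ_GreenD (f g : X -> X) :
  finite_type (classes alpha) \/ (forall x y, alpha x y <-> x = y) ->
  TXa alpha f -> TXa alpha g -> GreenJ alpha f g -> GreenD alpha f g.
Proof.
  intros FT Tf Tg. rewrite (GreenD_iff f g Tf Tg), (GreenJ_iff f g Tf Tg).
  intros [S | [E1 [E2 E3]]]; [left; exact S | right].
  split; [exact E2|]. split.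
  - apply separates_of_equipotent_classes_imset; assumption.
  - apply separates_of_equipotent_classes_imset, equipotent_sym; assumption.
Qed.

End Green.

Lemma inequivalent_sequence {X : Type} (alpha : X -> X -> Prop) {Ha : Equivalence alpha} :
  ~ finite_type (classes alpha) ->
  exists r : nat -> X, forall n m, alpha (r n) (r m) -> n = m.
Proof.
  intro NF.
  assert (fresh : forall l : list X, exists z, forall w, In w l -> ~ alpha z w).
  { intro l. apply NNPP. intro H. apply NF. exists (map (class_of alpha) l). intro C.
    apply NNPP. intro Hn. apply H. exists (rep C). intros w Hw Hw'. apply Hn.
    rewrite <- (class_of_rep alpha C), ((proj2 (class_of_eq_iff alpha _ _)) Hw').
    apply in_map, Hw. }
  set (next := fun l => proj1_sig (constructive_indefinite_description _ (fresh l))).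
  assert (next_fresh : forall l w, In w l -> ~ alpha (next l) w)
    by (intro l; exact (proj2_sig (constructive_indefinite_description _ (fresh l)))).
  set (prefix := fix prefix n :=
         match n with 0 => nil | S k => next (prefix k) :: prefix k end).
  exists (fun n => next (prefix n)).
  assert (in_prefix : forall n m, n < m -> In (next (prefix n)) (prefix m)).
  { intros n m; induction m as [|m IH]; intro Hlt; [lia|]. simpl.
    destruct (PeanoNat.Nat.eq_dec n m) as [-> | Hne];
      [left; reflexivity | right; apply IH; lia]. }
  intros n m H. destruct (PeanoNat.Nat.lt_total n m) as [Hlt | [Heq | Hlt]].
  - exfalso. apply (next_fresh (prefix m) _ (in_prefix n m Hlt)). symmetry. exact H.
  - exact Heq.
  - exfalso. exact (next_fresh (prefix n) _ (in_prefix m n Hlt) H).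
Qed.

Section Counterexample.
Context {X : Type} (alpha : X -> X -> Prop) {Ha : Equivalence alpha}.
Variables (r : nat -> X) (a b : X).
Hypothesis r_inequiv : forall n m, alpha (r n) (r m) -> n = m.
Hypothesis ab_equiv : alpha a b.
Hypothesis ab_neq : a <> b.

(* [index x] is the [n] with [x] in the class of [r n] ([0] if there is none).
   Both maps factor through [index]; [f] has the two [alpha]-equivalent points
   [a] and [b] in its image, while the image of [g] is separated. *)
Let index (x : X) : nat := epsilon (inhabits 0) (fun n => alpha x (r n)).
Let F (n : nat) : X := match n with 0 => a | 1 => b | _ => r n end.
Let f (x : X) : X := F (index x).
Let g (x : X) : X := r (index x).

Let index_r n : index (r n) = n.
Proof.
  symmetry. apply r_inequiv.
  apply (epsilon_spec _ (fun m => alpha (r n) (r m))). exists n. reflexivity.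
Qed.

Let index_invariant x y : alpha x y -> index x = index y.
Proof. intro H. unfold index. rewrite (class_pred_eq alpha x y H). reflexivity. Qed.

Let f_TXa : TXa alpha f.
Proof. intros x y H. unfold f. rewrite (index_invariant x y H). reflexivity. Qed.

Let g_TXa : TXa alpha g.
Proof. intros x y H. unfold g. rewrite (index_invariant x y H). reflexivity. Qed.

Let separates_im_g : separates alpha (im g).
Proof. intros c d [x <-] [y <-] H. unfold g. f_equal. apply r_inequiv, H. Qed.

Let not_separates_im_f : ~ separates alpha (im f).
Proof.
  intro S. apply ab_neq. apply S; [exists (r 0) | exists (r 1) | exact ab_equiv];
    unfold f; rewrite index_r; reflexivity.
Qed.

Let equipotent_nat (h : X -> X) :
  injects (imset h) nat -> injects nat (classes (preimrel alpha h)) ->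
  equipotent (classes (preimrel alpha h)) nat /\ equipotent (imset h) nat.
Proof.
  intros Rh Ch. pose proof (injects_classes_imset alpha h).
  split; apply Schroeder_Bernstein; eauto using injects_trans.
Qed.

Let f_rank : equipotent (classes (preimrel alpha f)) nat /\ equipotent (imset f) nat.
Proof.
  apply equipotent_nat; [exact (injects_imset_comp index F)|].
  exists (fun n => class_of _ (r (S (S n)))). intros n m E.
  apply (class_of_eq_iff (preimrel alpha f)) in E. red in E. unfold f in E.
  rewrite !index_r in E. apply r_inequiv in E. injection E as E. exact E.
Qed.

Let g_rank : equipotent (classes (preimrel alpha g)) nat /\ equipotent (imset g) nat.
Proof.
  apply equipotent_nat; [exact (injects_imset_comp index r)|].
  exists (fun n => class_of _ (r n)). intros n m E.
  apply (class_of_eq_iff (preimrel alpha g)) in E. red in E. unfold g in E.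
  rewrite !index_r in E. apply r_inequiv, E.
Qed.

Lemma GreenJ_not_GreenD :
  exists f g, TXa alpha f /\ TXa alpha g /\ GreenJ alpha f g /\ ~ GreenD alpha f g.
Proof.
  destruct f_rank as [Cf Rf], g_rank as [Cg Rg].
  exists f, g. split; [exact f_TXa|]. split; [exact g_TXa|]. split.
  - apply (GreenJ_iff alpha a f g f_TXa g_TXa). right. split; [|split].
    + eapply equipotent_trans; [exact Cf | apply equipotent_sym, Rf].
    + eapply equipotent_trans; [exact Rf | apply equipotent_sym, Rg].
    + eapply equipotent_trans; [exact Rg | apply equipotent_sym, Cg].
  - rewrite (GreenD_iff alpha a f g f_TXa g_TXa). intros [S | [_ [Sf _]]].
    + exact (not_separates_im_f
               (separates_same_im alpha g f (same_im_sym f g S) separates_im_g)).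
    + exact (not_separates_im_f Sf).
Qed.

End Counterexample.

Lemma GreenD_eq_GreenJ_iff {X : Type} (alpha : X -> X -> Prop) {Ha : Equivalence alpha}
  (x0 : X) :
  (forall f g, TXa alpha f -> TXa alpha g -> (GreenD alpha f g <-> GreenJ alpha f g))
  <-> finite_type (classes alpha) \/ (forall x y, alpha x y <-> x = y).
Proof.
  split.
  - intro DJ. apply NNPP. intro Hn. apply not_or_and in Hn as [NF NT].
    apply NT. intros x y. split; [|intros ->; reflexivity].
    intro Hxy. apply NNPP. intro Hne.
    destruct (inequivalent_sequence alpha NF) as [r Hr].
    destruct (GreenJ_not_GreenD alpha r x y Hr Hxy Hne) as [f [g [Tf [Tg [J ND]]]]].
    apply ND, DJ; assumption.
  - intros FT f g Tf Tg. split.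
    + apply (GreenD_GreenJ alpha x0); assumption.
    + apply (GreenJ_GreenD alpha x0); assumption.
Qed.

Theorem theorem5p6 (X : Type) (alpha : X -> X -> Prop)
  (hX : inhabited X) (halpha : Equivalence alpha) :
  (forall f g : X -> X, TXa alpha f -> TXa alpha g ->
     (GreenL alpha f g <-> same_im f g)
  /\ (GreenR alpha f g <->
        f = g \/ (same_ker f g /\ separates alpha (im f) /\ separates alpha (im g)))
  /\ (GreenH alpha f g <->
        f = g \/ (same_ker f g /\ same_im f g /\ separates alpha (im f)))
  /\ (GreenD alpha f g <->
        same_im f g \/
        (equipotent (imset f) (imset g) /\ separates alpha (im f) /\ separates alpha (im g)))
  /\ (GreenJ alpha f g <->
        same_im f g \/
        (equipotent (classes (preimrel alpha f)) (imset f)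
         /\ equipotent (imset f) (imset g)
         /\ equipotent (imset g) (classes (preimrel alpha g)))))
  /\ ((forall f g : X -> X, TXa alpha f -> TXa alpha g ->
         (GreenD alpha f g <-> GreenJ alpha f g))
      <-> (finite_type (classes alpha) \/ (forall x y, alpha x y <-> x = y))).
Proof.
  destruct hX as [x0]. split.
  - intros f g Tf Tg.
    split; [exact (GreenL_iff alpha f g Tf Tg)|].
    split; [exact (GreenR_iff alpha x0 f g Tf Tg)|].
    split; [exact (GreenH_iff alpha x0 f g Tf Tg)|].
    split; [exact (GreenD_iff alpha x0 f g Tf Tg)|].
    exact (GreenJ_iff alpha x0 f g Tf Tg).
  - exact (GreenD_eq_GreenJ_iff alpha x0).
Qed.
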